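(* For the $n\times n$ identity matrix $I_n$ (with $n\ge 2$), $\mathsf{m}^{rd}(+\infty,I_n)\le\frac{n}{3n-4}$.
   Context: For $A\in\{0,1\}^{N\times n}$ and $m\ge0$, unit vectors $U_1,\dots,U_N,V_1,\dots,V_n\in\mathbb{R}^d$ form a margin-$m$, relative-bias-$0$ embedding of $A$ if $\langle U_j,V_i\rangle\ge m$ whenever $A_{ji}=1$ and $\langle U_j,V_i\rangle\le -m$ whenever $A_{ji}=0$. $\mathsf{m}^{rd}(d,A)$ is the supremum of such $m$ in dimension $d$, and $\mathsf{m}^{rd}(+\infty,A)=\sup_d\mathsf{m}^{rd}(d,A)$. *)

From HB Require Import structures.
From mathcomp Require Import all_boot all_order all_algebra.
From mathcomp Require Import all_classical all_reals.
From mathcomp Require Import ereal.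
Set Implicit Arguments. Unset Strict Implicit. Unset Printing Implicit Defensive.
Import Order.TTheory GRing.Theory Num.Theory.
Local Open Scope ring_scope.
Local Open Scope classical_set_scope.

Definition dotv (R : realType) (d : nat) (u v : 'rV[R]_d) : R :=
  \sum_(k < d) u 0 k * v 0 k.

Definition unitv (R : realType) (d : nat) (u : 'rV[R]_d) : Prop :=
  dotv u u = 1.

(* U_1..U_N, V_1..V_n form a margin-m, relative-bias-0 embedding of A
   (A is a 0/1 matrix, encoded with boolean entries: true = 1, false = 0). *)
Definition rd_embedding (R : realType) (d N n : nat) (A : 'M[bool]_(N, n))
    (m : R) (U : 'I_N -> 'rV[R]_d) (V : 'I_n -> 'rV[R]_d) : Prop :=
  (forall j, unitv (U j)) /\ (forall i, unitv (V i)) /\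
  (forall j i, if A j i then m <= dotv (U j) (V i)
               else dotv (U j) (V i) <= - m).

Definition mrd (R : realType) (d N n : nat) (A : 'M[bool]_(N, n)) : \bar R :=
  ereal_sup [set (m%:E) | m in
    [set m : R | 0 <= m /\ exists U V, @rd_embedding R d N n A m U V]].

(* m^rd(+oo, A) = sup_d m^rd(d, A). *)
Definition mrd_inf (R : realType) (N n : nat) (A : 'M[bool]_(N, n)) : \bar R :=
  ereal_sup (range (fun d : nat => @mrd R d N n A)).

Definition id01 (n : nat) : 'M[bool]_(n, n) := \matrix_(j, i) (j == i).

From HB Require Import structures.
From mathcomp Require Import all_boot all_order all_algebra.
From mathcomp Require Import all_classical all_reals.
From mathcomp Require Import ereal.
From mathcomp Require Import ring lra.
Set Implicit Arguments. Unset Strict Implicit. Unset Printing Implicit Defensive.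
Import Order.TTheory GRing.Theory Num.Theory.
Local Open Scope ring_scope.

(* Write s and t for the sums of the U_j and of the V_j.  The margin
   conditions give  <s, t> = sum_{i,j} <U_j, V_i> <= D - n(n-1)m  with
   D = sum_j <U_j, V_j> >= nm.  On the other hand
   4<s, t> = |s + t|^2 - |s - t|^2 >= -|s - t|^2 >= -n sum_j |U_j - V_j|^2
   = -n(2n - 2D)  by Cauchy-Schwarz and  |U_j| = |V_j| = 1.  Comparing the two
   bounds, and using D >= nm once more, leaves  m n (6n - 8) <= 2n^2. *)

Section DotProduct.
Variables (R : realType) (d : nat).
Implicit Types (u v w : 'rV[R]_d).

Lemma dotvC u v : dotv u v = dotv v u.
Proof. by apply: eq_bigr => k _; rewrite mulrC. Qed.

Lemma dotv_ge0 u : 0 <= dotv u u.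
Proof. by apply: sumr_ge0 => k _; rewrite -expr2; exact: sqr_ge0. Qed.

Lemma dotvDl u w v : dotv (u + w) v = dotv u v + dotv w v.
Proof. by rewrite /dotv -big_split; apply: eq_bigr => k _; rewrite mxE mulrDl. Qed.

Lemma dotvBl u w v : dotv (u - w) v = dotv u v - dotv w v.
Proof. by rewrite /dotv -sumrB; apply: eq_bigr => k _; rewrite !mxE mulrBl. Qed.

Lemma dotvDr u v w : dotv u (v + w) = dotv u v + dotv u w.
Proof. by rewrite dotvC dotvDl !(dotvC u). Qed.

Lemma dotvBr u v w : dotv u (v - w) = dotv u v - dotv u w.
Proof. by rewrite dotvC dotvBl !(dotvC u). Qed.

Lemma dotv_suml (I : Type) (r : seq I) (P : pred I) (F : I -> 'rV[R]_d) v :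
  dotv (\sum_(i <- r | P i) F i) v = \sum_(i <- r | P i) dotv (F i) v.
Proof.
rewrite /dotv exchange_big; apply: eq_bigr => k _.
by rewrite summxE mulr_suml.
Qed.

Lemma dotv_sumr (I : Type) (r : seq I) (P : pred I) (F : I -> 'rV[R]_d) u :
  dotv u (\sum_(i <- r | P i) F i) = \sum_(i <- r | P i) dotv u (F i).
Proof. by rewrite dotvC dotv_suml; apply: eq_bigr => i _; rewrite dotvC. Qed.

Lemma dotv_sqrB u v : dotv (u - v) (u - v) = dotv u u + dotv v v - 2 * dotv u v.
Proof. by rewrite dotvBl !dotvBr (dotvC v u); ring. Qed.

Lemma dotv_sqrD u v : dotv (u + v) (u + v) = dotv u u + dotv v v + 2 * dotv u v.
Proof. by rewrite dotvDl !dotvDr (dotvC v u); ring. Qed.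

Lemma dotv_sum_le_card (n : nat) (W : 'I_n -> 'rV[R]_d) :
  dotv (\sum_i W i) (\sum_i W i) <= n%:R * \sum_i dotv (W i) (W i).
Proof.
(* sum_{j,k} |W_j - W_k|^2 = 2n sum_j |W_j|^2 - 2|sum_j W_j|^2 is nonnegative. *)
set A := \sum_i dotv (W i) (W i).
have hcst (x : R) : \sum_(i < n) x = n%:R * x by rewrite sumr_const card_ord mulr_natl.
have : 0 <= \sum_j \sum_k dotv (W j - W k) (W j - W k).
  by apply: sumr_ge0 => j _; apply: sumr_ge0 => k _; exact: dotv_ge0.
under eq_bigr => j _ do
  rewrite (eq_bigr _ (fun k _ => dotv_sqrB (W j) (W k))) sumrB big_split /=
          hcst -/A -mulr_sumr -dotv_sumr.
rewrite sumrB big_split /= hcst -!mulr_sumr -/A -dotv_suml; lra.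
Qed.

Lemma dotv_sums_lower (n : nat) (U V : 'I_n -> 'rV[R]_d) :
  - (n%:R * \sum_j dotv (U j - V j) (U j - V j)) <=
  4 * dotv (\sum_j U j) (\sum_j V j).
Proof.
set s := \sum_j U j; set t := \sum_j V j.
have hst : s - t = \sum_j (U j - V j) by rewrite sumrB.
have := dotv_sum_le_card (fun j => U j - V j); rewrite -hst dotv_sqrB.
have := dotv_ge0 (s + t); rewrite dotv_sqrD; lra.
Qed.

End DotProduct.

Section IdentityEmbedding.
Variables (R : realType) (n d : nat) (m : R) (U V : 'I_n -> 'rV[R]_d).
Hypothesis embUV : rd_embedding (id01 n) m U V.

Lemma id01_embedding_diag j : m <= dotv (U j) (V j).
Proof. by have [_ [_ /(_ j j)]] := embUV; rewrite mxE eqxx. Qed.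

Lemma id01_embedding_offdiag j i : i != j -> dotv (U j) (V i) <= - m.
Proof.
by move=> neq_ij; have [_ [_ /(_ j i)]] := embUV; rewrite mxE eq_sym (negbTE neq_ij).
Qed.

Lemma id01_embedding_sum_diag : n%:R * m <= \sum_j dotv (U j) (V j).
Proof.
rewrite mulr_natl -[in X in X <= _](card_ord n) -sumr_const.
by apply: ler_sum => j _; exact: id01_embedding_diag.
Qed.

Lemma id01_embedding_dotv_sums :
  dotv (\sum_j U j) (\sum_i V i) <=
  \sum_j dotv (U j) (V j) - n%:R * (n%:R - 1) * m.
Proof.
have hrow j : \sum_i dotv (U j) (V i) <= dotv (U j) (V j) - (n%:R - 1) * m.
  rewrite (bigD1 j) //=.
  have : \sum_(i | i != j) dotv (U j) (V i) <= \sum_(i | i != j) - m.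
    by apply: ler_sum => i; exact: id01_embedding_offdiag.
  have n_gt0 : (0 < n)%N := leq_ltn_trans (leq0n j) (ltn_ord j).
  by rewrite sumr_const cardC1 card_ord -subn1 -[- m *+ _]mulr_natr natrB //; lra.
rewrite dotv_suml; under eq_bigr do rewrite dotv_sumr.
apply: le_trans (ler_sum _ (fun j _ => hrow j)) _.
by rewrite sumrB sumr_const card_ord -[(_ * m) *+ n]mulr_natl mulrA.
Qed.

Lemma id01_embedding_sum_dist :
  \sum_j dotv (U j - V j) (U j - V j) = 2 * n%:R - 2 * \sum_j dotv (U j) (V j).
Proof.
have [unitU [unitV _]] := embUV.
under eq_bigr => j _ do rewrite dotv_sqrB unitU unitV.
by rewrite sumrB sumr_const card_ord -mulr_sumr -mulr_natl; ring.
Qed.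

Lemma id01_embedding_margin_le : (2 <= n)%N -> m <= n%:R / (3 * n%:R - 4).
Proof.
move=> n_ge2; have n2 : (2 : R) <= n%:R by rewrite ler_nat.
have := dotv_sums_lower U V; rewrite id01_embedding_sum_dist.
have := id01_embedding_dotv_sums; have := id01_embedding_sum_diag.
set D := \sum_j _; set P := dotv _ _ => hD hP hlow.
have : 0 <= (2 * n%:R - 4) * (D - n%:R * m) by apply: mulr_ge0; lra.
rewrite ler_pdivlMr; last by lra.
nra.
Qed.

End IdentityEmbedding.

Theorem corollaryD1 (R : realType) (n : nat) (hn : (2 <= n)%N) :
  (@mrd_inf R n n (id01 n) <= ((n%:R / (3 * n%:R - 4) : R)%:E))%E.
Proof.
apply: ub_ereal_sup => _ [d _ <-].
apply: ub_ereal_sup => _ [m [_ [U [V embUV]]] <-].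
by rewrite lee_fin; exact: id01_embedding_margin_le embUV hn.
Qed.
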